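(* Let $W$ be $\{0,1\}$-valued, let $x\in\mathbb X$ and $B\Subset\mathbb X$. Then \[ (\mathfrak h/B)(x)=\begin{cases}\{e\setminus B\mid e\in\mathfrak h(x)\}&\text{if }x\notin B,\\ \{\{x\}\}&\text{if }x\in B.\end{cases} \] In particular, $\{x\}\notin(\mathfrak h/B)(x)$ implies both $\deg_{\mathfrak h/B}(x)\le\deg_{\mathfrak h}(x)$ and $\{x\}\notin\mathfrak h$.
   Context: $\mathbb X$ is a finite or countably infinite set; $e\Subset\mathbb X$ means finite subset. $W:\{X\Subset\mathbb X\}\to\{0,1\}$ is a pure hard-core interaction, and $\mathfrak h=\{e\Subset\mathbb X\mid W(e)=0\}$. The conditional interaction is $W(X\mid B)=\prod_{C\subset B}W(X\cup C)$ if $X\cap B=\varnothing$, $W(X\mid B)=0$ if $X=\{y\}$ with $y\in B$, and $W(X\mid B)=1$ otherwise; it is again $\{0,1\}$-valued, and $\mathfrak h/B=\{e\Subset\mathbb X\mid W(e\mid B)=0\}$. For a set $\mathfrak g$ of finite subsets, $\mathfrak g(x)=\{e\in\mathfrak g\mid x\in e\}$ and $\deg_{\mathfrak g}(x)=|\mathfrak g(x)|\in\{0,1,2,\dots\}\cup\{\infty\}$. *)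

From HB Require Import structures.
From mathcomp Require Import all_boot all_algebra finmap.
From mathcomp Require Import boolp classical_sets cardinality.
Set Implicit Arguments. Unset Strict Implicit. Unset Printing Implicit Defensive.
Import GRing.Theory Num.Theory.

Local Open Scope ring_scope.

Definition cond_int (R : comPzRingType) (T : choiceType)
    (W : {fset T} -> R) (B X : {fset T}) : R :=
  if (X `&` B == fset0)%fset then \prod_(C <- fpowerset B) W (X `|` C)%fset
  else if has (fun y => X == [fset y]%fset) B then 0 else 1.

Definition hc (R : comPzRingType) (T : choiceType) (W : {fset T} -> R)
  : set {fset T} := [set e | W e = 0].

Definition hcond (R : comPzRingType) (T : choiceType) (W : {fset T} -> R)
  (B : {fset T}) : set {fset T} := [set e | cond_int W B e = 0].

(* g(x) = { e in g | x in e } ; deg_g(x) = |g(x)| (compared as cardinals). *)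
Definition star (T : choiceType) (g : set {fset T}) (x : T) : set {fset T} :=
  [set e | g e /\ x \in e].

From HB Require Import structures.
From mathcomp Require Import all_boot all_algebra finmap.
From mathcomp Require Import boolp classical_sets cardinality.
Import GRing.Theory Num.Theory.
Local Open Scope classical_set_scope.

(* W(e | B) vanishes in exactly two ways: either e misses B and W(e ∪ C) = 0
   for some C ⊆ B, or e = {y} with y ∈ B.  So for x ∉ B the edges of h/B at x
   are the traces e \ B of the edges e ∋ x of h (take C = e ∩ B, so that
   (e \ B) ∪ C = e), while for x ∈ B only {x} survives.  The map
   e ↦ e \ B then bounds the degree, and {x} ∈ h would give {x} = {x} \ B ∈
   (h/B)(x).  As the coefficients form an integral domain, a product vanishes
   iff a factor does, so W need not be {0,1}-valued. *)

Section ConditionalInteraction.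

Variables (R : idomainType) (T : choiceType) (W : {fset T} -> R) (B : {fset T}).

Lemma cond_int_eq0_disjoint (X : {fset T}) : [disjoint X & B]%fset ->
  cond_int W B X = 0%R <-> exists2 C, (C `<=` B)%fset & W (X `|` C)%fset = 0%R.
Proof.
move=> XB; rewrite /cond_int fsetI_eq0 XB.
split=> [/eqP | [C CB WC]].
  by rewrite prodf_seq_eq0 => /hasP[C]; rewrite fpowersetE => CB /eqP; exists C.
apply/eqP; rewrite prodf_seq_eq0; apply/hasP.
by exists C; rewrite ?fpowersetE //= WC.
Qed.

Lemma cond_int_eq0_meet (X : {fset T}) : ~~ [disjoint X & B]%fset ->
  cond_int W B X = 0%R <-> exists2 y, y \in B & X = [fset y]%fset.
Proof.
move=> XB; rewrite /cond_int fsetI_eq0 (negbTE XB).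
case: hasP => [[y yB /eqP XE] | noy]; split=> //; first by exists y.
  by move/eqP; rewrite oner_eq0.
by case=> y yB XE; case: noy; exists y; last exact/eqP.
Qed.

Lemma star_hcond_notin (x : T) : x \notin B ->
  star (hcond W B) x = [set (e `\` B)%fset | e in star (hc W) x].
Proof.
move=> xB; apply/seteqP; split=> [e [eB0 xe] | _ [e [We xe] <-]] /=.
  have [eB | /(cond_int_eq0_meet _) eBy] := boolP [disjoint e & B]%fset.
    have [C CB WeC] := (cond_int_eq0_disjoint _ eB).1 eB0.
    exists (e `|` C)%fset; first by split; rewrite // in_fsetU xe.
    have /eqP CB0 : (C `\` B == fset0)%fset by rewrite fsetD_eq0.
    by rewrite fsetDUl CB0 fsetU0; apply/fsetDidPl.
  have [y yB ey] := eBy.1 eB0.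
  by move: xe xB; rewrite ey inE => /eqP ->; rewrite yB.
have eDB : [disjoint e `\` B & B]%fset.
  by have /fsubsetDP[] := fsubset_refl (e `\` B)%fset.
split; last by rewrite in_fsetD xB xe.
apply/(cond_int_eq0_disjoint _ eDB).
by exists (e `&` B)%fset; rewrite ?fsubsetIr // fsetUC fsetID.
Qed.

Lemma star_hcond_in (x : T) : x \in B ->
  star (hcond W B) x = [set [fset x]%fset].
Proof.
move=> xB; apply/seteqP; split=> [e [eB0 xe] | _ ->] /=.
  have eB : ~~ [disjoint e & B]%fset.
    by apply: contraL xB => /fdisjointP; apply.
  have [y yB ey] := (cond_int_eq0_meet _ eB).1 eB0.
  by move: xe; rewrite ey inE => /eqP ->.
split; last exact: fset11.
by apply/cond_int_eq0_meet; [rewrite fdisjoint1X xB | exists x].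
Qed.

End ConditionalInteraction.

Theorem lemma5p3 (R : numDomainType) (T : countType) (W : {fset T} -> R)
  (hW : forall e, W e = 0%R \/ W e = 1%R) (x : T) (B : {fset T}) :
  (x \notin B ->
     star (hcond W B) x = [set (e `\` B)%fset | e in star (hc W) x]) /\
  (x \in B -> star (hcond W B) x = [set [fset x]%fset]) /\
  (~ star (hcond W B) x [fset x]%fset ->
     (star (hcond W B) x #<= star (hc W) x)%card /\ ~ hc W [fset x]%fset).
Proof.
split; first exact: star_hcond_notin.
split; first exact: star_hcond_in.
move=> xNstar.
have xB : x \notin B.
  by apply: contra_notN xNstar => xB; rewrite star_hcond_in.
rewrite star_hcond_notin //; split; first exact: card_image_le.
move=> Wx; apply: xNstar; rewrite star_hcond_notin //.
exists [fset x]%fset; first by split; rewrite ?fset11.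
by apply/fsetDidPl; rewrite fdisjoint1X.
Qed.
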